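(* Over any alphabet with at least $4$ letters, for every odd integer $\ell\ge3$ there exists a palindrome of length $\ell$ whose critical exponent is exactly $\tfrac32$.
   Context: A word $x=x[1..n]$ has period $q$ if $x[i]=x[i+q]$ for $1\le i\le n-q$. For integers $p>q\ge1$, $x$ is a $(p/q)$-power if it has length $p$ and period $q$. The exponent $\exp(w)$ of a finite nonempty word $w$ is the largest rational $p/q$ such that $w$ is a $(p/q)$-power. The critical exponent of $w$ is the maximum of $\exp(w')$ over all nonempty factors $w'$ of $w$. A palindrome is a word equal to its reversal. *)

From mathcomp Require Import all_boot all_order all_algebra.
Set Implicit Arguments. Unset Strict Implicit. Unset Printing Implicit Defensive.
Import Order.TTheory GRing.Theory Num.Theory.

Definition has_period (A : eqType) (x : seq A) (q : nat) : Prop :=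
  forall (x0 : A) (i : nat), i + q < size x -> nth x0 x i = nth x0 x (i + q).

Definition is_power (A : eqType) (x : seq A) (p q : nat) : Prop :=
  (0 < q)%N /\ (q < p)%N /\ size x = p /\ has_period x q.

Definition factor (A : eqType) (u w : seq A) : Prop :=
  exists l r : seq A, w = l ++ u ++ r.

Definition is_exponent (A : eqType) (w : seq A) (r : rat) : Prop :=
  (exists p q, is_power w p q /\ r = (p%:R / q%:R)%R) /\
  (forall p q, is_power w p q -> (p%:R / q%:R <= r)%R).

Definition is_critical_exponent (A : eqType) (w : seq A) (r : rat) : Prop :=
  (exists u, factor u w /\ u != [::] /\ is_exponent u r) /\
  (forall u e, factor u w -> u != [::] -> is_exponent u e -> (e <= r)%R).

Definition palindrome (A : eqType) (w : seq A) : Prop := rev w = w.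

From mathcomp Require Import all_boot all_order all_algebra zify.
Import Order.TTheory GRing.Theory Num.Theory.
Set Implicit Arguments. Unset Strict Implicit.

(* The 11-uniform morphism h on {0,1,2,3} below maps every letter to a
   palindrome and preserves the absence of factors of exponent above 3/2.
   A repetition of period q < 40 in h(w) lives in the image of a factor of w
   of length at most 7, and these finitely many cases are checked by
   computation. A longer one contains a whole image block h(x); since no h(x)
   occurs in h(y)h(z) at a position other than 0 or 11, the period is a
   multiple 11q' of 11, and as every h(x) begins and ends with x, w itself has
   a repetition of period q'. So the words h^n(0) are palindromes of length
   11^n without such factors; their central factor of odd length l is again
   a palindrome, and its three middle letters aba are a (3/2)-power. *)

Lemma nth_cat_mid (T : Type) (x0 : T) (l u r : seq T) j : j < size u ->
  nth x0 (l ++ u ++ r) (size l + j) = nth x0 u j.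
Proof. by move=> ju; rewrite nth_cat ltnNge leq_addr addKn nth_cat ju. Qed.

Lemma nseqS_cat (T : Type) n (x : T) s : nseq n x ++ x :: s = nseq n.+1 x ++ s.
Proof. by elim: n => //= n ->. Qed.

Definition pow32_free (T : eqType) (w : seq T) :=
  forall u p q, factor u w -> is_power u p q -> 2 * p <= 3 * q.

Section Factors.
Variables T S : eqType.
Implicit Types u v w : seq T.

Lemma pow32_free_factor v w : factor v w -> pow32_free w -> pow32_free v.
Proof.
move=> /infixP vw free u p q /infixP uv; apply: free.
exact/infixP/(infix_trans uv vw).
Qed.

Lemma factor_map (f : T -> S) (u : seq S) w :
  factor u (map f w) -> exists2 v, factor v w & u = map f v.
Proof.
move=> [l [r Ew]]; exists (take (size u) (drop (size l) w)).
  by exists (take (size l) w), (drop (size u) (drop (size l) w)); rewrite !cat_take_drop.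
have := congr1 (drop (size l)) Ew; rewrite -map_drop drop_size_cat // => Edrop.
by rewrite map_take Edrop take_size_cat.
Qed.

Lemma is_power_map_inj (f : T -> S) u p q :
  {in u &, injective f} -> is_power (map f u) p q -> is_power u p q.
Proof.
move=> f_inj [q_gt0 [qp [su per]]]; rewrite size_map in su.
do 3 split=> //; move=> x0 i iq.
have ltiu : i < size u by lia.
apply: f_inj; rewrite ?mem_nth // -!(nth_map x0 (f x0)) //.
by apply: per; rewrite size_map.
Qed.

Lemma pow32_free_map (f : T -> S) w :
  {in w &, injective f} -> pow32_free w -> pow32_free (map f w).
Proof.
move=> f_inj free u p q /factor_map [v vw ->] /is_power_map_inj pv.
have sub_vw : {subset v <= w} by apply/mem_subseq/infixW/infixP.
by apply: (free v _ _ vw); apply: pv; apply: sub_in2 f_inj.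
Qed.

Lemma is_power_aba (a b : T) : is_power [:: a; b; a] 3 2.
Proof. by do ! split; move=> x0 [|[|i]] //=; lia. Qed.

Lemma ratio_le32 p q : 0 < q -> 2 * p <= 3 * q -> (p%:R / q%:R <= 3%:R / 2%:R :> rat)%R.
Proof.
move=> q_gt0 le_pq; rewrite ler_pdivrMr ?ltr0n // mulrAC ler_pdivlMr ?ltr0n //.
by rewrite -!natrM ler_nat mulnC.
Qed.

Lemma pow32_free_critical w (a b : T) :
  pow32_free w -> factor [:: a; b; a] w -> is_critical_exponent w (3%:R / 2%:R)%R.
Proof.
move=> free aba_w.
have bound u p q : factor u w -> is_power u p q -> (p%:R / q%:R <= 3%:R / 2%:R :> rat)%R.
  by move=> uw [q_gt0 pu]; apply: ratio_le32 (free u p q uw (conj q_gt0 pu)).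
split=> [|u e uw _ [[p [q [pu ->]]] _]]; last exact: bound uw pu.
exists [:: a; b; a]; do 2 split=> //; split.
  by exists 3, 2; split; first exact: is_power_aba.
by move=> p q; apply: bound.
Qed.

Lemma palindrome_mid x v y : size x = size y -> palindrome (x ++ v ++ y) -> palindrome v.
Proof.
rewrite /palindrome !rev_cat -catA => sxy /eqP.
rewrite eqseq_cat ?size_rev // => /andP [_]; rewrite eqseq_cat ?size_rev //.
by case/andP=> /eqP.
Qed.

Lemma palindrome_aba w : palindrome w -> odd (size w) -> 2 < size w ->
  exists a b, factor [:: a; b; a] w.
Proof.
move=> pal odd_w gt2.
have [x0 _] : exists x0 : T, True by case: {pal odd_w} w gt2 => // x0; exists x0.
set k := (size w)./2.-1.
have size_w : size w = k + k + 3.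
  by move: (odd_double_half (size w)) gt2; rewrite odd_w -addnn /k; lia.
have -> : w = take k w ++ [:: nth x0 w k; nth x0 w k.+1; nth x0 w k.+2] ++ drop k.+3 w.
  rewrite -{1}(cat_take_drop k w) (drop_nth x0 (n := k)) ?(drop_nth x0 (n := k.+1))
    ?(drop_nth x0 (n := k.+2)) // size_w; lia.
have -> : nth x0 w k.+2 = nth x0 w k by rewrite -{1}pal nth_rev size_w; [congr nth | ]; lia.
by exists (nth x0 w k), (nth x0 w k.+1); exists (take k w), (drop k.+3 w).
Qed.

End Factors.

(* (q + q/2).+1 is the least length of a word of period q with exponent above 3/2. *)
Definition rep32_at (w : seq nat) i q :=
  [/\ 0 < q, i + (q + q %/ 2).+1 <= size w &
      forall j, j <= q %/ 2 -> nth 0 w (i + j) = nth 0 w (i + j + q)].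

Definition rep32 (w : seq nat) := exists i q, rep32_at w i q.

Lemma rep32_at_cat l u r i q : rep32_at u i q -> rep32_at (l ++ u ++ r) (size l + i) q.
Proof.
case=> q_gt0 fit per; split=> //; first by rewrite !size_cat; lia.
move=> j le_j; rewrite -!addnA !nth_cat_mid ?addnA; [exact: per | lia | lia].
Qed.

Lemma rep32_at_uncat l u r i q : i + (q + q %/ 2).+1 <= size u ->
  rep32_at (l ++ u ++ r) (size l + i) q -> rep32_at u i q.
Proof.
move=> fit [q_gt0 _ per]; split=> // j le_j.
by have := per j le_j; rewrite -!addnA !nth_cat_mid ?addnA //; lia.
Qed.

Lemma rep32_factor u w : factor u w -> rep32 u -> rep32 w.
Proof. by move=> [l [r ->]] [i [q rep]]; exists (size l + i), q; apply: rep32_at_cat. Qed.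

Lemma pow32_free_rep32 w : ~ rep32 w -> pow32_free w.
Proof.
move=> free u p q [l [r Ew]] [q_gt0 [_ [size_u per]]]; subst w.
rewrite leqNgt; apply/negP => big.
apply: free; exists (size l), q; split=> //; first by rewrite !size_cat size_u leq_add2l; lia.
move=> j le_j; rewrite -!addnA !nth_cat_mid ?addnA; try apply: per; rewrite size_u; lia.
Qed.

Definition long_run m (s : seq bool) :=
  exists i, i + m.+1 <= size s /\ forall j, j <= m -> nth false s (i + j).

(* cur counts the trues read just before s *)
Fixpoint short_runs (m cur : nat) (s : seq bool) : bool :=
  if s is b :: s' then
    if b then (cur < m) && short_runs m cur.+1 s' else short_runs m 0 s'
  else true.

Lemma short_runs_sound m cur s :
  cur <= m -> short_runs m cur s -> ~ long_run m (nseq cur true ++ s).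
Proof.
elim: s cur => [|b s IHs] cur le_cur /=.
  by move=> _ [i []]; rewrite cats0 size_nseq; lia.
case: b => [/andP [lt_cur runs] | runs [i [fit run]]].
  by rewrite nseqS_cat; apply: IHs.
rewrite size_cat size_nseq /= in fit.
have [le_i|lt_i] := leqP i cur.
  have := run (cur - i) ltac:(lia).
  rewrite nth_cat size_nseq ltnNge (_ : cur <= i + (cur - i)) /=; last lia.
  by rewrite (_ : i + (cur - i) - cur = 0) //; lia.
apply: (IHs 0 (leq0n _) runs); exists (i - cur.+1); split=> [/=|j le_j]; first lia.
have := run j le_j; rewrite nth_cat size_nseq ltnNge (_ : cur <= i + j) /=; last lia.
by rewrite (_ : i + j - cur = (i - cur.+1 + j).+1) //; lia.
Qed.

Lemma short_runs_complete m cur s :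
  cur <= m -> ~ long_run m (nseq cur true ++ s) -> short_runs m cur s.
Proof.
elim: s cur => [|b s IHs] cur le_cur no_run //=.
case: b no_run => no_run.
  have [lt_cur|ge_cur] := ltnP cur m; first by apply: IHs => //; rewrite -nseqS_cat.
  case: no_run; exists 0; rewrite size_cat size_nseq /=; split=> [|j le_j]; first lia.
  rewrite nth_cat size_nseq; case: ltnP => [lt_j | ge_j]; first by rewrite nth_nseq lt_j.
  by rewrite (_ : 0 + j - cur = 0) //; lia.
apply: IHs => // -[i [fit run]]; apply: no_run; exists (cur.+1 + i).
rewrite size_cat size_nseq /=; split=> [|j le_j]; first by move: fit => /=; lia.
rewrite nth_cat size_nseq ltnNge (_ : cur <= cur.+1 + i + j) /=; last lia.
by rewrite (_ : cur.+1 + i + j - cur = (i + j).+1) /=; [exact: run | lia].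
Qed.

Definition matches (w : seq nat) q := [seq x.1 == x.2 | x <- zip w (drop q w)].

Lemma size_matches w q : size (matches w q) = size w - q.
Proof. by rewrite size_map size_zip size_drop; apply/minn_idPr/leq_subr. Qed.

Lemma nth_matches w q j : j < size w - q ->
  nth false (matches w q) j = (nth 0 w j == nth 0 w (j + q)).
Proof.
move=> lt_j; have lt_jz : j < size (zip w (drop q w)).
  by rewrite size_zip size_drop (minn_idPr (leq_subr _ _)).
by rewrite (nth_map (0, 0)) // nth_zip_cond lt_jz /= nth_drop addnC.
Qed.

Definition rep32_freeb (w : seq nat) :=
  all (fun q => short_runs (q %/ 2) 0 (matches w q)) (iota 1 (size w)).

Lemma rep32_freebP w : rep32_freeb w <-> ~ rep32 w.
Proof.
split=> [free [i [q [q_gt0 fit per]]] | free].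
  have q_in : q \in iota 1 (size w) by rewrite mem_iota; lia.
  apply: (short_runs_sound (leq0n _) (allP free q q_in)); exists i.
  rewrite /= size_matches; split=> [|j le_j]; first lia.
  by rewrite nth_matches ?per //; lia.
apply/allP => q; rewrite mem_iota => /andP [q_gt0 _].
apply: short_runs_complete => // -[i [fit run]]; apply: free; exists i, q.
rewrite /= size_matches in fit; split=> // [|j le_j]; first lia.
by have := run j le_j; rewrite nth_matches; [move/eqP | lia].
Qed.

Notation quaternary w := (all (fun x => x < 4) w).

(* Letters above 3 are mapped like 3; only quaternary words matter. *)
Definition h (x : nat) : seq nat :=
  match x with
  | 0 => [:: 0; 1; 2; 1; 3; 0; 3; 1; 2; 1; 0]
  | 1 => [:: 1; 2; 0; 2; 3; 0; 3; 2; 0; 2; 1]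
  | 2 => [:: 2; 3; 0; 1; 2; 0; 2; 1; 0; 3; 2]
  | _ => [:: 3; 0; 2; 0; 1; 2; 1; 0; 2; 0; 3]
  end.

Definition h_word (w : seq nat) := flatten (map h w).

Lemma size_h x : size (h x) = 11.
Proof. by case: x => [|[|[|]]]. Qed.

Lemma rev_h x : rev (h x) = h x.
Proof. by case: x => [|[|[|]]]. Qed.

Lemma h_quaternary x : quaternary (h x).
Proof. by case: x => [|[|[|]]]. Qed.

Lemma h_ends x : x < 4 -> nth 0 (h x) 0 = x /\ nth 0 (h x) 10 = x.
Proof. by case: x => [|[|[|[|]]]]. Qed.

Lemma h_synchronizing x y z r : x < 4 -> y < 4 -> z < 4 -> 0 < r < 11 ->
  h x != take 11 (drop r (h y ++ h z)).
Proof.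
have all4 : all (fun x => all (fun y => all (fun z => all (fun r =>
    h x != take 11 (drop r (h y ++ h z))) (iota 1 10)) (iota 0 4)) (iota 0 4)) (iota 0 4).
  by vm_compute.
move=> x4 y4 z4 r11; move: all4.
move=> /allP /(_ x); rewrite mem_iota x4 => /(_ isT) /allP /(_ y); rewrite mem_iota y4.
move=> /(_ isT) /allP /(_ z); rewrite mem_iota z4 => /(_ isT) /allP /(_ r).
by rewrite mem_iota; apply; lia.
Qed.

Lemma h_word_cat s t : h_word (s ++ t) = h_word s ++ h_word t.
Proof. by rewrite /h_word map_cat flatten_cat. Qed.

Lemma h_word_cons x s : h_word (x :: s) = h x ++ h_word s.
Proof. by []. Qed.

Lemma size_h_word w : size (h_word w) = 11 * size w.
Proof. by elim: w => //= x w IHw; rewrite h_word_cons size_cat size_h IHw mulnS. Qed.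

Lemma rev_h_word w : rev (h_word w) = h_word (rev w).
Proof.
elim: w => //= x w IHw.
by rewrite h_word_cons rev_cat IHw rev_h rev_cons -cats1 h_word_cat /h_word /= cats0.
Qed.

Lemma h_word_quaternary w : quaternary (h_word w).
Proof. by elim: w => //= x w IHw; rewrite h_word_cons all_cat h_quaternary IHw. Qed.

Lemma drop_h_word c w : drop (11 * c) (h_word w) = h_word (drop c w).
Proof.
have [le_c | lt_c] := leqP c (size w).
  by rewrite -{1}(cat_take_drop c w) h_word_cat drop_size_cat // size_h_word size_takel.
by rewrite !drop_oversize // ?size_h_word; lia.
Qed.

Lemma nth_h_word_drop c s w : nth 0 (h_word w) (11 * c + s) = nth 0 (h_word (drop c w)) s.
Proof. by rewrite -nth_drop drop_h_word. Qed.

Lemma nth_h_word c s w : c < size w -> s < 11 ->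
  nth 0 (h_word w) (11 * c + s) = nth 0 (h (nth 0 w c)) s.
Proof.
by move=> lt_c lt_s; rewrite nth_h_word_drop (drop_nth 0 lt_c) h_word_cons nth_cat size_h lt_s.
Qed.

Lemma nth_quaternary w k : quaternary w -> k < size w -> nth 0 w k < 4.
Proof. by move=> /allP w4 lt_k; apply/w4/mem_nth. Qed.

Lemma h_word_shift_aligned w b q : quaternary w -> 11 * b + q + 11 <= size (h_word w) ->
  (forall t, t < 11 -> nth 0 (h_word w) (11 * b + t) = nth 0 (h_word w) (11 * b + t + q)) ->
  11 %| q.
Proof.
move=> w4 fit same; rewrite size_h_word in fit.
set c := (11 * b + q) %/ 11; set r := (11 * b + q) %% 11.
have def_c : 11 * b + q = 11 * c + r by rewrite /c /r; lia.
have lt_r : r < 11 by rewrite /r; lia.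
clearbody c r.
have [r0 | r_gt0] := posnP r; first by apply/dvdnP; exists (c - b); lia.
have [lt_b lt_c lt_c1] : [/\ b < size w, c < size w & c.+1 < size w] by split; lia.
case/negP: (h_synchronizing (nth_quaternary w4 lt_b) (nth_quaternary w4 lt_c)
  (nth_quaternary w4 lt_c1) (r := r) ltac:(lia)).
apply/eqP/(@eq_from_nth _ 0) => [|t].
  by rewrite size_h size_takel // size_drop size_cat !size_h; lia.
rewrite size_h => lt_t; rewrite nth_take // nth_drop -nth_h_word // same //.
rewrite (_ : 11 * b + t + q = 11 * c + (r + t)); last lia.
rewrite nth_h_word_drop (drop_nth 0 lt_c) (drop_nth 0 lt_c1) !h_word_cons catA nth_cat.
by rewrite size_cat !size_h ifT //; lia.
Qed.

Lemma rep32_at_h_word w i q : quaternary w -> 1 < q ->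
  rep32_at (h_word w) i (11 * q) -> rep32_at w (i %/ 11) q.
Proof.
move=> w4 q_gt1 [_ fit per]; rewrite size_h_word in fit.
split=> [||j le_j]; [lia | lia |].
have [lt1 lt2] : i %/ 11 + j < size w /\ i %/ 11 + j + q < size w by lia.
have [le_i | lt_i] := leqP i (11 * (i %/ 11 + j)).
  have := per (11 * (i %/ 11 + j) - i) ltac:(lia).
  rewrite (_ : i + _ = 11 * (i %/ 11 + j) + 0); last lia.
  rewrite (_ : _ + 11 * q = 11 * (i %/ 11 + j + q) + 0); last lia.
  by rewrite !nth_h_word // !(proj1 (h_ends _)) ?nth_quaternary.
have := per (11 * (i %/ 11 + j) + 10 - i) ltac:(lia).
rewrite (_ : i + _ = 11 * (i %/ 11 + j) + 10); last lia.
rewrite (_ : _ + 11 * q = 11 * (i %/ 11 + j + q) + 10); last lia.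
by rewrite !nth_h_word // !(proj2 (h_ends _)) ?nth_quaternary.
Qed.

Lemma h_word_long_rep32 w i q : quaternary w -> 40 <= q -> rep32_at (h_word w) i q -> rep32 w.
Proof.
move=> w4 ge_q rep; have [q_gt0 fit per] := rep; rewrite size_h_word in fit.
set b := (i + 10) %/ 11.
have /dvdnP [q' def_q] : 11 %| q.
  apply: (h_word_shift_aligned (b := b) w4); first by rewrite size_h_word; lia.
  move=> t lt_t; have := per (11 * b + t - i) ltac:(lia).
  by rewrite (_ : i + (11 * b + t - i) = 11 * b + t) //; lia.
exists (i %/ 11), q'; apply: rep32_at_h_word => //; first lia.
by rewrite mulnC -def_q.
Qed.

Fixpoint words4 n : seq (seq nat) :=
  if n is n'.+1 then [seq x :: v | x <- iota 0 4, v <- words4 n'] else [:: [::]].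

Lemma words4_complete v : quaternary v -> v \in words4 (size v).
Proof.
elim: v => //= x v IHv /andP [x4 /IHv v_in].
by case: x x4 => [|[|[|[|x]]]] // _; rewrite !mem_cat (map_f _ v_in) ?orbT.
Qed.

Lemma h_word_rep32_freeb_small :
  all (fun v => ~~ rep32_freeb v || rep32_freeb (h_word v))
      (flatten [seq words4 n | n <- iota 0 8]).
Proof. vm_cast_no_check (erefl true). Qed.

Lemma h_word_rep32_free_small v :
  size v <= 7 -> quaternary v -> ~ rep32 v -> ~ rep32 (h_word v).
Proof.
move=> size_v v4 /rep32_freebP free; apply/rep32_freebP.
have v_in : v \in flatten [seq words4 n | n <- iota 0 8].
  by apply/flatten_mapP; exists (size v); [rewrite mem_iota; lia | exact: words4_complete].
by have := allP h_word_rep32_freeb_small v v_in; rewrite free.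
Qed.

Lemma h_word_short_rep32 w i q : quaternary w -> ~ rep32 w -> q < 40 ->
  ~ rep32_at (h_word w) i q.
Proof.
move=> w4 free lt_q rep; have [q_gt0 fit _] := rep; rewrite size_h_word in fit.
set b := i %/ 11; set n := (i + q + q %/ 2) %/ 11 - b + 1.
set v := take n (drop b w); set r := drop n (drop b w).
have Ew : w = take b w ++ v ++ r by rewrite !cat_take_drop.
have size_v : size v = n by rewrite size_takel // size_drop; lia.
apply: (@h_word_rep32_free_small v); first by rewrite size_v; lia.
- by move: w4; rewrite {1}Ew !all_cat => /and3P [].
- by move=> rep_v; apply/free/(rep32_factor _ rep_v); exists (take b w), r.
exists (i - 11 * b), q; apply: (@rep32_at_uncat (h_word (take b w)) _ (h_word r)).
  by rewrite size_h_word size_v; lia.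
have -> : size (h_word (take b w)) + (i - 11 * b) = i by rewrite size_h_word size_takel; lia.
by rewrite -!h_word_cat -Ew.
Qed.

Lemma h_word_rep32_free w : quaternary w -> ~ rep32 w -> ~ rep32 (h_word w).
Proof.
move=> w4 free [i [q rep]]; have [lt_q | ge_q] := ltnP q 40.
  exact: h_word_short_rep32 rep.
exact/free/(h_word_long_rep32 w4 ge_q rep).
Qed.

Definition h_iter n := iter n h_word [:: 0].

Lemma size_h_iter n : size (h_iter n) = 11 ^ n.
Proof. by elim: n => //= n IHn; rewrite size_h_word IHn expnS. Qed.

Lemma h_iter_palindrome n : palindrome (h_iter n).
Proof. by elim: n => //= n IHn; rewrite /palindrome rev_h_word IHn. Qed.

Lemma h_iter_quaternary n : quaternary (h_iter n).
Proof. by case: n => //= n; apply: h_word_quaternary. Qed.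

Lemma h_iter_rep32_free n : ~ rep32 (h_iter n).
Proof.
elim: n => [[i [q [q_gt0 fit _]]] | n IHn]; first by move: fit => /=; lia.
exact: h_word_rep32_free (h_iter_quaternary n) IHn.
Qed.

Lemma exists_quaternary_pow32_free_palindrome l : odd l ->
  exists c, [/\ size c = l, palindrome c, quaternary c & pow32_free c].
Proof.
move=> odd_l; set W := h_iter l; set k := (11 ^ l - l) %/ 2.
have size_W : size W = k + l + k.
  have odd_N : odd (11 ^ l) by rewrite oddX orbT.
  have := ltn_expl l (isT : 1 < 11); have := odd_double_half (11 ^ l).
  have := odd_double_half l; rewrite odd_N odd_l -!addnn size_h_iter /k; lia.
set c := take l (drop k W); set r := drop l (drop k W).
have EW : W = take k W ++ c ++ r by rewrite !cat_take_drop.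
have size_c : size c = l by rewrite size_takel // size_drop; lia.
exists c; split=> //.
- apply: (@palindrome_mid _ (take k W) _ r); last by rewrite -EW; apply: h_iter_palindrome.
  by rewrite size_takel /r ?size_drop ?size_W; lia.
- by move: (h_iter_quaternary l); rewrite -/W {1}EW !all_cat => /and3P [].
- apply: (@pow32_free_factor _ _ W); first by exists (take k W), r.
  exact/pow32_free_rep32/h_iter_rep32_free.
Qed.

Theorem mainTheorem7 (A : finType) (hA : (4 <= #|A|)%N) (l : nat)
  (hl : (3 <= l)%N) (hodd : odd l) :
  exists w : seq A, size w = l /\ palindrome w /\
    is_critical_exponent w (3%:R / 2%:R)%R.
Proof.
have [c [size_c pal_c c4 free_c]] := exists_quaternary_pow32_free_palindrome hodd.
have /card_gt0P [a0 _] : 0 < #|A| by lia.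
set f := nth a0 (enum A).
have f_inj : {in c &, injective f}.
  have lt_enum z : z < 4 -> z < size (enum A) by move=> z4; rewrite -cardE (leq_trans z4 hA).
  move=> x y /(allP c4) /lt_enum x_lt /(allP c4) /lt_enum y_lt /eqP.
  by rewrite nth_uniq ?enum_uniq // => /eqP.
have pal_w : palindrome (map f c) by rewrite /palindrome -map_rev pal_c.
have [a [b aba]] : exists a b, factor [:: a; b; a] (map f c).
  by apply: palindrome_aba; rewrite // size_map size_c.
exists (map f c); split; first by rewrite size_map.
by split; last exact: pow32_free_critical (pow32_free_map f_inj free_c) aba.
Qed.
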